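(* For all $t\in\mathbb N$ and $k\in\mathbb Z$ the sets $A_t(k)$, $B_t(k)$ and $C_t(k)$ are finite unions of arithmetic progressions. Their densities $a_t(k)$, $b_t(k)$ satisfy, for all $t\in\mathbb N$, $k\in\mathbb Z$: \begin{align*} a_{4t}(k)&=\tfrac12\bigl(a_{2t}(k)+b_{2t}(k)\bigr), & b_{4t}(k)&=\tfrac12\bigl(a_{2t}(k)+b_{2t}(k)\bigr),\\ a_{4t+1}(k)&=\tfrac12\bigl(a_{2t}(k)+b_{2t}(k-1)\bigr), & b_{4t+1}(k)&=\tfrac12\bigl(a_{2t+1}(k)+b_{2t+1}(k+1)\bigr),\\ a_{4t+2}(k)&=\tfrac12\bigl(a_{2t+1}(k)+b_{2t+1}(k)\bigr), & b_{4t+2}(k)&=\tfrac12\bigl(a_{2t+1}(k-1)+b_{2t+1}(k+1)\bigr),\\ a_{4t+3}(k)&=\tfrac12\bigl(a_{2t+1}(k-1)+b_{2t+1}(k)\bigr), & b_{4t+3}(k)&=\tfrac12\bigl(a_{2t+2}(k)+b_{2t+2}(k+1)\bigr), \end{align*} with initial conditions $a_0(k)=b_0(k)=1$ if $k=0$ and $0$ otherwise; $a_1(k)=\frac12$ if $k\in\{0,1\}$ and $0$ otherwise; $b_1(k)=0$ for $k>1$, $b_1(1)=\frac14$, and $b_1(k)=3\cdot 2^{k-3}$ for $k<1$.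
   Context: For $n\in\mathbb N=\{0,1,2,\dots\}$ with binary digits $\delta_j(n)$, let $\mathsf r(n)=\#\{j\ge0:\delta_{j+1}(n)=\delta_j(n)=1\}$ (number of occurrences of $\mathtt{11}$ in binary), and $d(t,n)=\mathsf r(n+t)-\mathsf r(n)$. For $t\in\mathbb N$, $k\in\mathbb Z$ define $A_t(k)=\{n\in\mathbb N:d(t,2n)=k\}$, $B_t(k)=\{n\in\mathbb N:d(t,2n+1)=k\}$, $C_t(k)=\{n\in\mathbb N:d(t,n)=k\}$, and let $a_t(k)$, $b_t(k)$ denote the asymptotic densities of $A_t(k)$, $B_t(k)$. *)

From mathcomp Require Import all_boot all_order all_algebra.
Set Implicit Arguments. Unset Strict Implicit. Unset Printing Implicit Defensive.
Import Order.TTheory GRing.Theory Num.Theory.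

Definition bitd (j n : nat) : bool := odd (n %/ 2 ^ j).

(* r(n) = #{ j >= 0 : delta_{j+1}(n) = delta_j(n) = 1 }.
   Digits of index >= n vanish since n < 2^n, so j ranges over j < n. *)
Definition r11 (n : nat) : nat :=
  \sum_(j < n) (bitd j.+1 n && bitd j n).

Definition dd (t n : nat) : int := (r11 (n + t))%:Z - (r11 n)%:Z.

Definition Aset (t : nat) (k : int) : pred nat := fun n => dd t (2 * n) == k.
Definition Bset (t : nat) (k : int) : pred nat := fun n => dd t (2 * n + 1) == k.
Definition Cset (t : nat) (k : int) : pred nat := fun n => dd t n == k.

Definition in_AP (a d n : nat) : Prop := exists m : nat, n = a + m * d.

Definition fin_union_AP (S : pred nat) : Prop :=
  exists s : seq (nat * nat),
    (forall p, p \in s -> 0 < p.2) /\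
    (forall n, S n <-> exists2 p, p \in s & in_AP p.1 p.2 n).

Definition has_density (S : pred nat) (dens : rat) : Prop :=
  forall eps : rat, (0 < eps)%R -> exists N0 : nat, forall N : nat, (N0 <= N)%N ->
    (`| (count S (iota 0 N))%:R / N%:R - dens | < eps)%R.

(* Writing n = 2m + e and t = 2s + f with e, f in {0, 1}, the difference r(n+t) - r(n) is
   d(s, m) or d(s+1, m) up to a correction depending only on the parities of m and s.
   Hence, for t >= 2, each of A_t(k) and B_t(k) interleaves (even part, odd part) an A set
   and a B set of smaller index, and C_t(k) interleaves A_t(k) and B_t(k). Interleaving
   preserves finite unions of arithmetic progressions and averages densities, which gives
   both claims and the recursions by strong induction on t. The one self-referential case
   is B_1(k), whose odd part is B_1(k+1); since d(1, n) <= 1, B_1(k) is empty for k > 1,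
   and a downward induction on k settles it. *)

From mathcomp Require Import all_boot all_order all_algebra.
From mathcomp Require Import zify ring lra.
From Stdlib Require Import FunctionalExtensionality ClassicalEpsilon.
Set Implicit Arguments. Unset Strict Implicit. Unset Printing Implicit Defensive.
Import Order.TTheory GRing.Theory Num.Theory.
Local Open Scope ring_scope.

Lemma bitd0 n : bitd 0 n = odd n.
Proof. by rewrite /bitd expn0 divn1. Qed.

Lemma bitdS j n : bitd j.+1 n = bitd j n./2.
Proof. by rewrite /bitd expnS divnMA divn2. Qed.

Lemma bitd_small j n : (n <= j)%N -> bitd j n = false.
Proof.
move=> le_nj; rewrite /bitd divn_small //.
by apply: leq_trans (ltn_expl n (isT : (1 < 2)%N)) _; rewrite leq_exp2l.
Qed.

Lemma r11_widen N n : (n <= N)%N ->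
  r11 n = (\sum_(j < N) (bitd j.+1 n && bitd j n))%N.
Proof.
move=> le_nN; rewrite /r11.
rewrite -!(big_mkord xpredT (fun j => (bitd j.+1 n && bitd j n) : nat)).
rewrite (@big_cat_nat _ _ _ n 0 N _ _ (leq0n n) le_nN) /=.
rewrite [X in (_ + X)%N]big1_seq ?addn0 // => j /andP[_].
by rewrite mem_index_iota => /andP[le_nj _]; rewrite (bitd_small le_nj) andbF.
Qed.

Lemma r11_half n : r11 n = ((odd n./2 && odd n) + r11 n./2)%N.
Proof.
rewrite (r11_widen (leqnSn n)) big_ord_recl /= bitdS !bitd0; congr (_ + _)%N.
rewrite (@r11_widen n n./2); last by rewrite leq_half_double -addnn; lia.
by apply: eq_bigr => i _; rewrite !bitdS.
Qed.

Lemma r11_double m : r11 (2 * m) = r11 m.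
Proof. by rewrite r11_half mul2n doubleK odd_double andbF. Qed.

Lemma r11_double_add1 m : r11 (2 * m + 1) = (odd m + r11 m)%N.
Proof. by rewrite r11_half mul2n addn1 /= uphalf_double odd_double andbT. Qed.

Lemma dd0 n : dd 0 n = 0.
Proof. by rewrite /dd addn0 subrr. Qed.

Lemma dd_double_double t n : dd (2 * t) (2 * n) = dd t n.
Proof. by rewrite /dd -mulnDr !r11_double. Qed.

Lemma dd_double_double_add1 t n :
  dd (2 * t) (2 * n + 1) = dd t n + (odd (n + t))%:Z - (odd n)%:Z.
Proof.
rewrite /dd (_ : 2 * n + 1 + 2 * t = 2 * (n + t) + 1)%N; last by lia.
rewrite !r11_double_add1 !PoszD; ring.
Qed.

Lemma dd_double_add1_double t n :
  dd (2 * t + 1) (2 * n) = dd t n + (odd (n + t))%:Z.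
Proof.
rewrite /dd (_ : 2 * n + (2 * t + 1) = 2 * (n + t) + 1)%N; last by lia.
rewrite r11_double_add1 r11_double PoszD; ring.
Qed.

Lemma dd_double_add1_double_add1 t n :
  dd (2 * t + 1) (2 * n + 1) = dd t.+1 n - (odd n)%:Z.
Proof.
rewrite /dd (_ : 2 * n + 1 + (2 * t + 1) = 2 * (n + t.+1))%N; last by lia.
rewrite r11_double_add1 r11_double PoszD; ring.
Qed.

Lemma dd1_le1 n : dd 1 n <= 1.
Proof.
elim/ltn_ind: n => n IH; rewrite -[n]odd_double_half -mul2n.
case: (boolP (odd n)) => [n_odd|_]; last first.
  by rewrite add0n (dd_double_add1_double 0) dd0 addn0 add0r; case: odd.
have lt_half : (n./2 < n)%N by rewrite -{2}[n]odd_double_half n_odd -addnn; lia.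
rewrite addnC (dd_double_add1_double_add1 0).
by have := IH _ lt_half; case: odd => /=; lia.
Qed.

Definition interleave (S T : pred nat) : pred nat :=
  fun n => if odd n then T n./2 else S n./2.

Lemma eq_interleave (P S T : pred nat) :
  (forall m, P (2 * m)%N = S m) -> (forall m, P (2 * m + 1)%N = T m) ->
  P = interleave S T.
Proof.
move=> PS PT; apply: functional_extensionality => n.
rewrite /interleave -{1}[n]odd_double_half -mul2n.
by case: odd; rewrite ?add0n ?PS // addnC PT.
Qed.

Lemma Aset_double t k : Aset (2 * t) k = interleave (Aset t k) (Bset t k).
Proof. by apply: eq_interleave => m; rewrite /Aset /Bset dd_double_double. Qed.

Lemma Bset_double t k : Bset (2 * t) k =
  interleave (Aset t (if odd t then k - 1 else k)) (Bset t (if odd t then k + 1 else k)).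
Proof.
apply: eq_interleave => m.
all: rewrite /Aset /Bset dd_double_double_add1 !mul2n !oddD ?odd_double /=.
all: by case: (odd t) => /=; apply/eqP/eqP; lia.
Qed.

Lemma Aset_double_add1 t k : Aset (2 * t + 1) k =
  interleave (Aset t (if odd t then k - 1 else k)) (Bset t (if odd t then k else k - 1)).
Proof.
apply: eq_interleave => m.
all: rewrite /Aset /Bset dd_double_add1_double !mul2n !oddD ?odd_double /=.
all: by case: (odd t) => /=; apply/eqP/eqP; lia.
Qed.

Lemma Bset_double_add1 t k :
  Bset (2 * t + 1) k = interleave (Aset t.+1 k) (Bset t.+1 (k + 1)).
Proof.
apply: eq_interleave => m.
all: rewrite /Aset /Bset dd_double_add1_double_add1 !mul2n ?oddD ?odd_double /=.
all: by apply/eqP/eqP; lia.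
Qed.

Lemma Cset_interleave t k : Cset t k = interleave (Aset t k) (Bset t k).
Proof. exact: eq_interleave. Qed.

Lemma Aset0 k : Aset 0 k = fun=> k == 0.
Proof. by apply: functional_extensionality => n; rewrite /Aset dd0 eq_sym. Qed.

Lemma Bset0 k : Bset 0 k = fun=> k == 0.
Proof. by apply: functional_extensionality => n; rewrite /Bset dd0 eq_sym. Qed.

Lemma Bset1_gt1 k : 1 < k -> Bset 1 k = fun=> false.
Proof.
move=> lt1k; apply: functional_extensionality => n; apply/negbTE/eqP => dd_eq.
by have := dd1_le1 (2 * n + 1); rewrite dd_eq; lia.
Qed.

Lemma fin_union_AP_const (b : bool) : fin_union_AP (fun=> b).
Proof.
case: b; last by exists [::]; split => // n; split => // [[]].
exists [:: (0, 1)]%N; split=> [p|n]; first by rewrite inE => /eqP ->.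
by split=> // _; exists (0, 1)%N; rewrite ?inE //; exists n; rewrite muln1.
Qed.

Definition dilate (b : bool) (p : nat * nat) : nat * nat := (b + p.1.*2, p.2.*2)%N.

Lemma in_AP_dilate b p n :
  in_AP (dilate b p).1 (dilate b p).2 n <-> odd n = b /\ in_AP p.1 p.2 n./2.
Proof.
split=> [[m ->]|[<- [m n2E]]].
  rewrite /= -doubleMr -addnA -doubleD oddD odd_double addbF half_bit_double.
  by rewrite oddb; split=> //; exists m.
by exists m; rewrite /= -doubleMr -addnA -doubleD -n2E odd_double_half.
Qed.

Lemma fin_union_AP_interleave (S T : pred nat) :
  fin_union_AP S -> fin_union_AP T -> fin_union_AP (interleave S T).
Proof.
move=> [s [s_gt0 sE]] [s' [s'_gt0 s'E]].
exists (map (dilate false) s ++ map (dilate true) s'); split.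
  move=> q; rewrite mem_cat => /orP[] /mapP[p p_in ->]; rewrite /= double_gt0.
    exact: s_gt0.
  exact: s'_gt0.
move=> n; rewrite /interleave; split.
  case: (boolP (odd n)) => n_odd.
    move=> /s'E[p p_in p_n]; exists (dilate true p).
      by rewrite mem_cat map_f ?orbT.
    by apply/in_AP_dilate.
  move=> /sE[p p_in p_n]; exists (dilate false p); first by rewrite mem_cat map_f.
  by apply/in_AP_dilate; rewrite (negbTE n_odd).
move=> [q]; rewrite mem_cat => /orP[] /mapP[p p_in ->] /in_AP_dilate[-> p_n].
  by apply/sE; exists p.
by apply/s'E; exists p.
Qed.

Local Notation cnt S N := ((count S (iota 0 N))%:R : rat).

Lemma count_iota0S (S : pred nat) N :
  count S (iota 0 N.+1) = (count S (iota 0 N) + S N)%N.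
Proof. by rewrite -addn1 iotaD count_cat /= addn0. Qed.

Lemma count_interleave (S T : pred nat) N :
  count (interleave S T) (iota 0 N) =
  (count S (iota 0 (uphalf N)) + count T (iota 0 N./2))%N.
Proof.
elim: N => [//|N IH]; rewrite count_iota0S IH.
rewrite (_ : uphalf N.+1 = N./2.+1) // (_ : N.+1./2 = uphalf N) //.
rewrite uphalf_half /interleave.
by case: odd; rewrite ?add0n ?add1n ?count_iota0S; lia.
Qed.

Lemma has_densityP (S : pred nat) d : has_density S d <->
  forall eps, 0 < eps -> exists N0, forall N, (N0 <= N)%N ->
    `|cnt S N - d * N%:R| <= eps * N%:R.
Proof.
have gapE N : (0 < N)%N -> `|cnt S N - d * N%:R| = `|cnt S N / N%:R - d| * N%:R.
  move=> N_gt0; rewrite -[X in _ = _ * X]normr_nat -normrM mulrBl divfK //.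
  by rewrite pnatr_eq0 -lt0n.
split=> dens eps eps_gt0.
  have [N0 N0P] := dens eps eps_gt0; exists N0.+1 => N le_N0N.
  rewrite gapE ?ler_pM2r ?ltr0n ?ltW ?N0P //; lia.
have [N0 N0P] := dens (eps / 2) (divr_gt0 eps_gt0 (ltr0Sn _ 1)).
exists N0.+1 => N le_N0N; have N_gt0 : (0 < N)%N by lia.
have := N0P N (ltnW le_N0N); rewrite gapE // ler_pM2r ?ltr0n // => le_gap.
by apply: le_lt_trans le_gap _; rewrite ltr_pdivrMr //; lra.
Qed.

Lemma has_density_const (b : bool) : has_density (fun=> b) b%:R.
Proof.
have countE N : count (fun=> b) (iota 0 N) = (b * N)%N.
  case: b; last exact: count_pred0.
  by rewrite mul1n -[in RHS](size_iota 0 N); apply: count_predT.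
apply/has_densityP => eps eps_gt0; exists 0%N => N _.
by rewrite countE natrM subrr normr0 mulr_ge0 // ltW.
Qed.

Lemma has_density_interleave (S T : pred nat) dS dT :
  has_density S dS -> has_density T dT ->
  has_density (interleave S T) ((dS + dT) / 2).
Proof.
move=> /has_densityP densS /has_densityP densT.
apply/has_densityP => eps eps_gt0.
have eps2_gt0 : 0 < eps / 2 by rewrite divr_gt0.
have [NS NSP] := densS _ eps2_gt0; have [NT NTP] := densT _ eps2_gt0.
pose N1 := Num.bound (`|dS - dT| / (eps / 2)).
have N1P : `|dS - dT| <= eps / 2 * N1%:R.
  by rewrite mulrC -ler_pdivrMr // ltW // archi_boundP // divr_ge0 // ltW.
exists (2 * (NS + NT) + N1)%N => N le_N.
rewrite count_interleave natrD.
set u := uphalf N; set h := N./2.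
have NE : N%:R = u%:R + h%:R :> rat.
  by rewrite -natrD /u uphalf_half -addnA addnn odd_double_half.
have uhE : u%:R - h%:R = (odd N)%:R :> rat by rewrite /u uphalf_half natrD addrK.
(* As [u - h = odd N], interleaving adds only the bounded error [(dS - dT) / 2 * odd N]. *)
have -> : cnt S u + cnt T h - (dS + dT) / 2 * N%:R =
    (cnt S u - dS * u%:R) + (cnt T h - dT * h%:R) + (dS - dT) / 2 * (odd N)%:R.
  by rewrite -uhE NE; field.
have boundS := NSP u (ltac:(rewrite /u geq_uphalf_double; lia)).
have boundT := NTP h (ltac:(rewrite /h geq_half_double; lia)).
have boundodd : `|(dS - dT) / 2 * (odd N)%:R| <= eps / 2 * N%:R.
  apply: le_trans (le_trans N1P _); last by rewrite ler_pM2l // ler_nat; lia.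
  rewrite normrM normr_nat normrM normfV (gtr0_norm (ltr0Sn _ 1)).
  by case: odd; rewrite ?mulr0 ?mulr1 //; have := normr_ge0 (dS - dT); lra.
apply: le_trans (ler_normD _ _) _; apply: le_trans (lerD (ler_normD _ _) (lexx _)) _.
have epsE : eps * N%:R = eps / 2 * u%:R + eps / 2 * h%:R + eps / 2 * N%:R.
  by rewrite NE; field.
lra.
Qed.

Lemma has_density_unique (S : pred nat) d1 d2 :
  has_density S d1 -> has_density S d2 -> d1 = d2.
Proof.
move=> dens1 dens2; case: (eqVneq d1 d2) => // d12_neq.
have gap_gt0 : 0 < `|d1 - d2| / 2 by rewrite divr_gt0 ?normr_gt0 ?subr_eq0.
have [N1 N1P] := dens1 _ gap_gt0; have [N2 N2P] := dens2 _ gap_gt0.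
have := N1P (N1 + N2)%N (leq_addr _ _); have := N2P (N1 + N2)%N (leq_addl _ _).
set x := _ / _ => lt2 lt1; have := ler_distD x d1 d2.
by rewrite [`|d1 - x|]distrC; lra.
Qed.

(* An arbitrary value when [S] has no density. *)
Definition density (S : pred nat) : rat := epsilon (inhabits 0) (has_density S).

Lemma densityE (S : pred nat) d : has_density S d -> density S = d.
Proof.
by move=> dens; apply: (has_density_unique _ dens); apply: epsilon_spec; exists d.
Qed.

Lemma density_const (b : bool) : density (fun=> b) = b%:R.
Proof. exact/densityE/has_density_const. Qed.

Definition regular (S : pred nat) : Prop := fin_union_AP S /\ has_density S (density S).

Lemma regular_const (b : bool) : regular (fun=> b).
Proof.
by split; rewrite ?density_const; [apply: fin_union_AP_const | apply: has_density_const].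
Qed.

Lemma density_interleave (S T : pred nat) : regular S -> regular T ->
  density (interleave S T) = (density S + density T) / 2.
Proof. by move=> [_ densS] [_ densT]; apply/densityE/has_density_interleave. Qed.

Lemma regular_interleave (S T : pred nat) :
  regular S -> regular T -> regular (interleave S T).
Proof.
move=> regS regT; rewrite /regular density_interleave //.
case: regS regT => [finS densS] [finT densT].
by split; [apply: fin_union_AP_interleave | apply: has_density_interleave].
Qed.

Definition regular_at (t : nat) : Prop :=
  (forall k, regular (Aset t k)) /\ (forall k, regular (Bset t k)).

Lemma regular_at0 : regular_at 0.
Proof. by split=> k; rewrite ?Aset0 ?Bset0; apply: regular_const. Qed.

Lemma regular_at_double t : regular_at t -> regular_at (2 * t).
Proof.
case=> regA regB; split=> k; rewrite ?Aset_double ?Bset_double.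
all: by apply: regular_interleave.
Qed.

Lemma regular_Aset_double_add1 t k : regular_at t -> regular (Aset (2 * t + 1) k).
Proof. by case=> regA regB; rewrite Aset_double_add1; apply: regular_interleave. Qed.

Lemma regular_Bset_double_add1 t k : regular_at t.+1 -> regular (Bset (2 * t + 1) k).
Proof. by case=> regA regB; rewrite Bset_double_add1; apply: regular_interleave. Qed.

Lemma regular_Bset1 k : regular (Bset 1 k).
Proof.
have [lt1k|le_k1] := ltrP 1 k; first by rewrite Bset1_gt1 //; apply: regular_const.
have regBset1_pred j : regular (Bset 1 (j + 1)) -> regular (Bset 1 j).
  move=> regB; rewrite (Bset_double_add1 0 j : Bset 1 j = _).
  exact/regular_interleave/regB/(regular_Aset_double_add1 _ regular_at0).
have [n ->] : exists n : nat, k = 1 - n%:Z by exists `|1 - k|%N; lia.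
elim: n => [|n IH]; apply: regBset1_pred.
  by rewrite Bset1_gt1 //; apply: regular_const.
by rewrite (_ : _ + 1 = 1 - n%:Z) //; lia.
Qed.

Lemma regular_at1 : regular_at 1.
Proof.
by split=> k; [apply: (regular_Aset_double_add1 _ regular_at0) | apply: regular_Bset1].
Qed.

Lemma regular_atT t : regular_at t.
Proof.
elim/ltn_ind: t => t IH.
have [t_small|t_ge2] := leqP t 1.
  by case: t t_small {IH} => [|[|]] // _; [apply: regular_at0 | apply: regular_at1].
have := odd_double_half t; rewrite -mul2n; case: odd => tE; rewrite -tE.
  rewrite addnC; split=> k; first by apply/regular_Aset_double_add1/IH; lia.
  by apply/regular_Bset_double_add1/IH; lia.
by rewrite add0n; apply/regular_at_double/IH; lia.
Qed.

Definition a (t : nat) (k : int) : rat := density (Aset t k).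
Definition b (t : nat) (k : int) : rat := density (Bset t k).

Lemma regular_Aset t k : regular (Aset t k).
Proof. exact: (regular_atT t).1. Qed.

Lemma regular_Bset t k : regular (Bset t k).
Proof. exact: (regular_atT t).2. Qed.

Lemma density_interleave_AB t t' j j' :
  density (interleave (Aset t j) (Bset t' j')) = (a t j + b t' j') / 2.
Proof. exact: density_interleave (regular_Aset _ _) (regular_Bset _ _). Qed.

Lemma a_double t k : a (2 * t) k = (a t k + b t k) / 2.
Proof. by rewrite /a Aset_double density_interleave_AB. Qed.

Lemma b_double t k : b (2 * t) k =
  (a t (if odd t then k - 1 else k) + b t (if odd t then k + 1 else k)) / 2.
Proof. by rewrite /b Bset_double density_interleave_AB. Qed.

Lemma a_double_add1 t k : a (2 * t + 1) k =
  (a t (if odd t then k - 1 else k) + b t (if odd t then k else k - 1)) / 2.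
Proof. by rewrite /a Aset_double_add1 density_interleave_AB. Qed.

Lemma b_double_add1 t k : b (2 * t + 1) k = (a (t + 1) k + b (t + 1) (k + 1)) / 2.
Proof. by rewrite /b Bset_double_add1 addn1 density_interleave_AB. Qed.

Lemma a0E k : a 0 k = if k == 0 then 1 else 0.
Proof. by rewrite /a Aset0 density_const; case: eqP. Qed.

Lemma b0E k : b 0 k = if k == 0 then 1 else 0.
Proof. by rewrite /b Bset0 density_const; case: eqP. Qed.

Lemma a1E k : a 1 k = if (k == 0) || (k == 1) then 1 / 2 else 0.
Proof.
rewrite (a_double_add1 0 k : a 1 k = _) a0E b0E subr_eq0.
by case: eqVneq => [->|_]; case: eqVneq => //= _; field.
Qed.

Lemma b1_gt1 k : 1 < k -> b 1 k = 0.
Proof. by move=> lt1k; rewrite /b Bset1_gt1 // density_const. Qed.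

Lemma b1_nonpos (n : nat) : b 1 (- n%:Z) = 3 * 2 ^ (- n%:Z - 3).
Proof.
have b1S k : b 1 k = (a 1 k + b 1 (k + 1)) / 2 by exact: (b_double_add1 0 k).
elim: n => [|n IH].
  by rewrite b1S a1E b1S a1E b1_gt1.
rewrite b1S (_ : - n.+1%:Z + 1 = - n%:Z); last by rewrite -addn1 PoszD; ring.
rewrite a1E IH (_ : (_ == 0) || (_ == 1) = false); last by apply/negP => /orP[] /eqP; lia.
rewrite (_ : - n.+1%:Z - 3 = (- n%:Z - 3) + (-1)); last by rewrite -addn1 PoszD; ring.
by rewrite [in RHS]expfzDr // exprN1 add0r mulrA.
Qed.

Lemma b1E k :
  b 1 k = if 1 < k then 0 else if k == 1 then 1 / 4 else 3 * (2 : rat) ^ (k - 3).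
Proof.
have [lt1k|le_k1] := ltrP 1 k; first exact: b1_gt1.
case: eqVneq => [->|k_neq1].
  by rewrite (b_double_add1 0 1 : b 1 1 = _) a1E b1_gt1.
have [n ->] : exists n : nat, k = - n%:Z by exists `|k|%N; lia.
exact: b1_nonpos.
Qed.

Theorem proposition3p2 :
  (forall (t : nat) (k : int),
      fin_union_AP (Aset t k) /\ fin_union_AP (Bset t k) /\ fin_union_AP (Cset t k)) /\
  exists a b : nat -> int -> rat,
    (forall (t : nat) (k : int),
        has_density (Aset t k) (a t k) /\ has_density (Bset t k) (b t k)) /\
    (forall (t : nat) (k : int),
      [/\ a (4 * t)%N k = (a (2 * t)%N k + b (2 * t)%N k) / 2,
          b (4 * t)%N k = (a (2 * t)%N k + b (2 * t)%N k) / 2,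
          a (4 * t + 1)%N k = (a (2 * t)%N k + b (2 * t)%N (k - 1)) / 2 &
          b (4 * t + 1)%N k = (a (2 * t + 1)%N k + b (2 * t + 1)%N (k + 1)) / 2] /\
      [/\ a (4 * t + 2)%N k = (a (2 * t + 1)%N k + b (2 * t + 1)%N k) / 2,
          b (4 * t + 2)%N k = (a (2 * t + 1)%N (k - 1) + b (2 * t + 1)%N (k + 1)) / 2,
          a (4 * t + 3)%N k = (a (2 * t + 1)%N (k - 1) + b (2 * t + 1)%N k) / 2 &
          b (4 * t + 3)%N k = (a (2 * t + 2)%N k + b (2 * t + 2)%N (k + 1)) / 2]) /\
    (forall k : int,
      [/\ a 0%N k = (if k == 0 then 1 else 0),
          b 0%N k = (if k == 0 then 1 else 0),
          a 1%N k = (if (k == 0) || (k == 1) then 1 / 2 else 0) &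
          b 1%N k = (if 1 < k then 0 else if k == 1 then 1 / 4
                     else 3 * (2 : rat) ^ (k - 3))]).
Proof.
split=> [t k|].
  have [[finA _] [finB _]] := (regular_Aset t k, regular_Bset t k).
  by rewrite Cset_interleave; do !split=> //; apply: fin_union_AP_interleave.
exists a, b; split.
  by move=> t k; split; [case: (regular_Aset t k) | case: (regular_Bset t k)].
have odd2 t : odd (2 * t) = false by rewrite mul2n odd_double.
have odd21 t : odd (2 * t + 1) by rewrite addn1 /= odd2.
split=> [t k|k]; last by split; [apply: a0E | apply: b0E | apply: a1E | apply: b1E].
have e4 : (4 * t = 2 * (2 * t))%N by rewrite mulnA.
have e42 : (4 * t + 2 = 2 * (2 * t + 1))%N by lia.
have e43 : (4 * t + 3 = 2 * (2 * t + 1) + 1)%N by lia.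
have e22 : (2 * t + 2 = 2 * t + 1 + 1)%N by rewrite -addnA.
rewrite e43 e42 e22 e4.
by rewrite !(a_double, b_double, a_double_add1, b_double_add1) !(odd2, odd21).
Qed.
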